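(* For every $n\ge2$: - the total number of pairs $(T,\ell)$ with $T$ a binary tree on $n$ vertices and $\ell$ a leaf of $T$ is $\binom{2n-2}{n-1}$; - the total, over these pairs, of the distance from the root to $\ell$ is $4^{n-1}-\binom{2n-2}{n-1}$. Hence the expected root-to-leaf distance is $$\frac{(2n-2)!!}{(2n-3)!!}-1=\sqrt{\pi n}-1+O\Bigl(\frac1{\sqrt n}\Bigr).$$
   Context: Binary trees are rooted trees in which every vertex has at most one left child and at most one right child, so a single child is designated left or right. The size is the number of vertices, and a leaf is a vertex with no children. The double factorials are $(2m)!!=2\cdot4\cdots(2m)$ and $(2m-1)!!=1\cdot3\cdots(2m-1)$. *)

From HB Require Import structures.
From mathcomp Require Import all_boot.
From Stdlib Require Import Reals.

Set Implicit Arguments.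
Unset Strict Implicit.
Unset Printing Implicit Defensive.

(* Binary trees: [bt_nil] is the empty (absent) subtree; [bt_node l r] is a
   vertex with left subtree l and right subtree r.  A binary tree on n >= 1
   vertices is a value of size n; a single child is thus designated left or
   right. *)
Inductive bt : Type := bt_nil | bt_node of bt & bt.

Definition bt_eq_dec (x y : bt) : {x = y} + {x <> y}.
Proof. decide equality. Defined.

HB.instance Definition _ := comparableMixin bt_eq_dec.

Fixpoint bsize (t : bt) : nat :=
  match t with
  | bt_nil => 0
  | bt_node l r => (bsize l + bsize r).+1
  end.

Fixpoint leaf_depths (t : bt) : seq nat :=
  match t with
  | bt_nil => [::]
  | bt_node bt_nil bt_nil => [:: 0]
  | bt_node l r => map S (leaf_depths l ++ leaf_depths r)
  end.

Fixpoint dfact (m : nat) : nat :=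
  match m with
  | 0 => 1
  | 1 => 1
  | S (S k as m1) => m * dfact k
  end.

(** Let c_n, l_n and d_n count the binary trees of size n, their leaves, and the total
    depth of their leaves.  Splitting at the root gives convolution recurrences, i.e.
    C = 1 + X C^2, L (1 - 2XC) = X and (D + L)(1 - 2XC) = L for the generating series.
    Since (1 - 2XC)^2 = 1 - 4X and the series B of central binomial coefficients
    satisfies B^2 (1 - 4X) = 1, we get L = X B and D + L = X / (1 - 4X), i.e.
    l_(n+1) = C(2n, n) and d_(n+1) + l_(n+1) = 4^n.  The expected depth is then a ratio
    r_n = (2n)!!/(2n-1)!! minus 1, and the Wallis integrals of sin^k, being decreasing,
    squeeze r_n^2 between PI n and PI (n + 1/2). *)

From mathcomp Require Import all_boot all_algebra zify.
From Stdlib Require Import Reals Lra Lia.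
From Coquelicot Require Import Coquelicot.
From mathcomp Require Import ring.

Set Implicit Arguments.
Unset Strict Implicit.
Unset Printing Implicit Defensive.
Close Scope R_scope.

(** * Enumerating binary trees *)

(* [f] is fuel: any [f >= n] yields the same list (trees_fuel_eq). *)
Fixpoint trees_fuel (f n : nat) : seq bt :=
  match f with
  | 0 => if n == 0 then [:: bt_nil] else [::]
  | f'.+1 => match n with
             | 0 => [:: bt_nil]
             | n'.+1 => [seq bt_node p.1 p.2 | i <- seq.iota 0 n'.+1,
                          p <- [seq (l, r) | l <- trees_fuel f' i, r <- trees_fuel f' (n' - i)]]
             end
  end.

Lemma trees_fuel_eq f g n : n <= f -> n <= g -> trees_fuel f n = trees_fuel g n.
Proof.
elim: f g n => [|f IH] [|g] [|n] //; cbn [trees_fuel]; rewrite !ltnS => Hf Hg.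
congr flatten; apply/eq_in_map => i; rewrite mem_iota add0n ltnS => /andP[_ Hi].
by rewrite (IH g i) ?(IH g (n - i)) //; lia.
Qed.

Lemma mem_trees_fuel f n t : n <= f -> (t \in trees_fuel f n) = (bsize t == n).
Proof.
elim: f n t => [|f IH] [|n] t //; cbn [trees_fuel]; try by case: t.
rewrite ltnS => Hn; apply/allpairsPdep/idP.
- move=> [i [[l r] [Hi /allpairsP [[l' r'] /= [Hl Hr [-> ->]]] ->]]] /=.
  move: Hi; rewrite mem_iota add0n ltnS => /andP [_ Hi].
  rewrite IH in Hl; last lia.
  rewrite IH in Hr; last lia.
  by rewrite eqSS (eqP Hl) (eqP Hr) subnKC.
- case: t => [|l r] //; rewrite [bsize _]/= eqSS => /eqP Hs.
  exists (bsize l), (l, r); split => //.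
    by rewrite mem_iota add0n ltnS -Hs leq_addr.
  apply/allpairsP; exists (l, r); split => //=; rewrite IH; lia.
Qed.

Lemma uniq_trees_fuel f n : n <= f -> uniq (trees_fuel f n).
Proof.
elim: f n => [|f IH] [|n] //; cbn [trees_fuel]; rewrite ltnS => Hn.
apply: allpairs_uniq_dep; first exact: iota_uniq.
- move=> i; rewrite mem_iota add0n ltnS => /andP[_ Hi].
  apply: allpairs_uniq; [apply: IH; lia | apply: IH; lia |].
  by move=> [a b] [c d] _ _ /= [-> ->].
- move=> [i [l r]] [j [l' r']].
  move=> /allpairsPdep [i1 [p1 [Hi Hp1 E1]]] /allpairsPdep [j1 [p2 [Hj Hp2 E2]]].
  move: Hi Hj; rewrite !mem_iota !add0n !ltnS => /andP[_ Hi] /andP[_ Hj].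
  move: E1 E2 Hp1 Hp2 Hi Hj => [<- <-] [<- <-] /allpairsP [[x y] /= [Hx _ [Ex Ey]]].
  move=> /allpairsP [[x' y'] /= [Hx' _ [Ex' Ey']]] Hi Hj [El Er]; subst.
  rewrite mem_trees_fuel in Hx; last lia.
  rewrite mem_trees_fuel in Hx'; last lia.
  by rewrite -(eqP Hx) -(eqP Hx').
Qed.

Definition trees n := trees_fuel n n.

Lemma mem_trees n t : (t \in trees n) = (bsize t == n).
Proof. exact: mem_trees_fuel. Qed.

Definition sum_trees (F : bt -> nat) n := \sum_(t <- trees n) F t.

Lemma sumn_map_trees F n s : uniq s -> (forall t, (t \in s) = (bsize t == n)) ->
  sumn [seq F t | t <- s] = sum_trees F n.
Proof.
move=> Us Hs; rewrite sumnE big_map; apply: perm_big.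
apply: uniq_perm => //; first exact: uniq_trees_fuel.
by move=> t; rewrite Hs mem_trees.
Qed.

Lemma sum_treesS F n : sum_trees F n.+1 =
  \sum_(i < n.+1) \sum_(l <- trees i) \sum_(r <- trees (n - i)) F (bt_node l r).
Proof.
rewrite /sum_trees /trees; cbn [trees_fuel]; rewrite big_allpairs_dep.
rewrite -(big_mkord xpredT (fun i => \sum_(l <- trees i) \sum_(r <- trees (n - i)) F (bt_node l r))).
rewrite /index_iota subn0; apply: eq_big_seq => i; rewrite mem_iota add0n ltnS => /andP[_ Hi].
by rewrite big_allpairs /trees (@trees_fuel_eq n i i) // (@trees_fuel_eq n (n - i) (n - i)) ?leq_subr.
Qed.

Lemma sum_trees_mul (F G : bt -> nat) i j :
  \sum_(l <- trees i) \sum_(r <- trees j) F l * G r = sum_trees F i * sum_trees G j.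
Proof. by rewrite /sum_trees big_distrl; apply: eq_bigr => l _; rewrite big_distrr. Qed.

Lemma sum_trees0 F : sum_trees F 0 = F bt_nil.
Proof. by rewrite /sum_trees big_seq1. Qed.

Lemma sum_trees_nil n : sum_trees (fun t => t == bt_nil) n = (n == 0).
Proof.
case: n => [|n]; first by rewrite sum_trees0.
by rewrite /sum_trees big1_seq // => t /andP[_]; rewrite mem_trees; case: t.
Qed.

Lemma sumn_mapS s : sumn (map S s) = sumn s + size s.
Proof. by elim: s => //= x s ->; lia. Qed.

Lemma size_leaf_depths_node l r : size (leaf_depths (bt_node l r)) =
  size (leaf_depths l) + size (leaf_depths r) + ((l == bt_nil) && (r == bt_nil)).
Proof. by case: l => [|a b]; case: r => [|c d] //=; rewrite ?size_map ?size_cat /=; lia. Qed.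

Lemma sumn_leaf_depths_node l r : sumn (leaf_depths (bt_node l r)) =
  sumn (leaf_depths l) + sumn (leaf_depths r) + size (leaf_depths l) + size (leaf_depths r).
Proof.
have E s1 s2 : sumn (map S (s1 ++ s2)) = sumn s1 + sumn s2 + size s1 + size s2.
  by rewrite sumn_mapS sumn_cat size_cat; lia.
by case: l => [|a b]; case: r => [|c d] //; rewrite [in LHS]/= ?E ?sumn_mapS /=; lia.
Qed.

Definition ntrees n := sum_trees (fun _ => 1) n.
Definition nleaves n := sum_trees (fun t => size (leaf_depths t)) n.
Definition tdepth n := sum_trees (fun t => sumn (leaf_depths t)) n.

Lemma ntreesS n : ntrees n.+1 = \sum_(i < n.+1) ntrees i * ntrees (n - i).
Proof.
rewrite /ntrees sum_treesS; apply: eq_bigr => i _; rewrite -sum_trees_mul.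
by apply: eq_bigr => l _; apply: eq_bigr.
Qed.

Lemma nleavesS n :
  nleaves n.+1 = (n == 0) + \sum_(i < n.+1) (nleaves i * ntrees (n - i) + ntrees i * nleaves (n - i)).
Proof.
have -> : nat_of_bool (n == 0) =
    \sum_(i < n.+1) sum_trees (fun t => t == bt_nil) i * sum_trees (fun t => t == bt_nil) (n - i).
  rewrite big_ord_recl /= !sum_trees_nil subn0 eqxx mul1n big1 ?addn0 // => i _.
  by rewrite sum_trees_nil.
rewrite /nleaves sum_treesS -big_split; apply: eq_bigr => i _.
rewrite /ntrees -!sum_trees_mul -!big_split; apply: eq_bigr => l _.
rewrite -!big_split; apply: eq_bigr => r _.
by rewrite size_leaf_depths_node mulnb muln1 mul1n addnC.
Qed.

Lemma tdepthS n : tdepth n.+1 = \sum_(i < n.+1)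
  (tdepth i * ntrees (n - i) + ntrees i * tdepth (n - i)
   + nleaves i * ntrees (n - i) + ntrees i * nleaves (n - i)).
Proof.
rewrite /tdepth sum_treesS; apply: eq_bigr => i _.
rewrite /ntrees /nleaves -!sum_trees_mul -!big_split; apply: eq_bigr => l _.
rewrite -!big_split; apply: eq_bigr => r _.
by rewrite sumn_leaf_depths_node !muln1 !mul1n.
Qed.

(** * Central binomial coefficients *)

Definition cbin j := 'C(j.*2, j).

Lemma cbinS j : j.+1 * cbin j.+1 = (4 * j + 2) * cbin j.
Proof.
have H1 := mul_bin_diag j.*2.+2 j.
have H2 := mul_bin_down j.*2.+1 j.
rewrite /= (_ : j.*2.+1 - j = j.+1) in H2; last lia.
apply/eqP; rewrite -(eqn_pmul2l (ltn0Sn j)) /cbin doubleS -H1; apply/eqP.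
have -> : j.+1 * (j.*2.+2 * 'C(j.*2.+1, j)) = j.*2.+2 * (j.+1 * 'C(j.*2.+1, j)) by lia.
by rewrite -H2; lia.
Qed.

Definition cbin_conv m := \sum_(j < m.+1) cbin j * cbin (m - j).
Definition cbin_wconv m := \sum_(j < m.+1) j * (cbin j * cbin (m - j)).

Lemma cbin_wconv_sym m : cbin_wconv m * 2 = m * cbin_conv m.
Proof.
have Erev : cbin_wconv m = \sum_(j < m.+1) (m - j) * (cbin j * cbin (m - j)).
  rewrite /cbin_wconv (reindex_inj rev_ord_inj) /=; apply: eq_bigr => j _.
  rewrite subSS (_ : m - (m - j) = j); last by have := ltn_ord j; lia.
  by rewrite mulnC [cbin (m - j) * _]mulnC mulnC.
rewrite muln2 -addnn {1}Erev /cbin_wconv -big_split /cbin_conv big_distrr /=.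
by apply: eq_bigr => j _; rewrite -mulnDl subnK // -ltnS.
Qed.

(* By [cbinS] the weighted convolution at m+1 is 4 W_m + 2 S_m, and 2 W_m = m S_m. *)
Lemma cbin_convS m : cbin_conv m.+1 = 4 * cbin_conv m.
Proof.
apply/eqP; rewrite -(eqn_pmul2l (ltn0Sn m)); apply/eqP.
have Hw : cbin_wconv m.+1 = 4 * cbin_wconv m + 2 * cbin_conv m.
  rewrite /cbin_wconv big_ord_recl /= mul0n add0n /cbin_conv.
  rewrite /cbin_wconv !big_distrr -big_split /=; apply: eq_bigr => j _.
  by rewrite /bump /= add1n subSS mulnA cbinS; lia.
have := cbin_wconv_sym m.+1; have := cbin_wconv_sym m; lia.
Qed.

Lemma cbin_conv_exp m : cbin_conv m = expn 4 m.
Proof.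
elim: m => [|m IH]; first by rewrite /cbin_conv big_ord1.
by rewrite cbin_convS IH expnS.
Qed.

(** * Generating series, truncated at X^N *)

Section TruncatedSeries.
Import GRing.Theory.
Local Open Scope ring_scope.

Variable N : nat.

Definition eq_below (p q : {poly int}) := forall i, (i < N)%nat -> p`_i = q`_i.

Lemma eq_below_sym p q : eq_below p q -> eq_below q p.
Proof. by move=> H i Hi; rewrite H. Qed.

Lemma eq_below_trans p q r : eq_below p q -> eq_below q r -> eq_below p r.
Proof. by move=> H1 H2 i Hi; rewrite H1 // H2. Qed.

Lemma eq_below_rewrite K M p q P Q :
  eq_below p q -> P = K * p + M -> K * q + M = Q -> eq_below P Q.
Proof.
move=> H -> <- i Hi; rewrite !coefD !coefM; congr (_ + _); apply: eq_bigr => j _.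
by rewrite H // (leq_ltn_trans (leq_subr _ _) Hi).
Qed.

Lemma eq_below_mul0 p q : eq_below (p * q) 0 -> q`_0 != 0 -> eq_below p 0.
Proof.
move=> H Hq i; elim: i {-2}i (leqnn i) => [|k IH] i Hik HiN.
  move: Hik; rewrite leqn0 => /eqP ->.
  have /eqP := H 0%nat (leq_ltn_trans (leq0n _) HiN).
  by rewrite coef0M coef0 mulf_eq0 (negbTE Hq) orbF => /eqP ->.
have /eqP := H i HiN.
rewrite coefM coef0 big_ord_recr /= subnn big1 ?add0r; last first.
  by move=> j _; rewrite (IH j) ?coef0 ?mul0r //; have := ltn_ord j; lia.
by rewrite mulf_eq0 (negbTE Hq) orbF => /eqP.
Qed.

Definition gf (f : nat -> nat) : {poly int} := \poly_(i < N) (f i)%:R.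

Lemma coef_gf f i : (i < N)%nat -> (gf f)`_i = (f i)%:R.
Proof. by move=> Hi; rewrite coef_poly Hi. Qed.

Lemma coef_gf_mul f g m : (m < N)%nat ->
  (gf f * gf g)`_m = (\sum_(i < m.+1) f i * g (m - i))%nat%:R.
Proof.
move=> Hm; rewrite coefM natr_sum; apply: eq_bigr => i _.
by rewrite !coef_gf ?natrM //; have := ltn_ord i; lia.
Qed.

Lemma coefXM_case (p : {poly int}) i : ('X * p)`_i = if i is m.+1 then p`_m else 0.
Proof. by rewrite coefXM; case: i. Qed.

Let C := gf ntrees.
Let L := gf nleaves.
Let D := gf tdepth.
Let B := gf cbin.
Let Q := gf (expn 4).
(* [Root] is sqrt(1 - 4X), as C is the Catalan series (gf_root_sqr). *)
Let Root := 1 - ('X * C) *+ 2.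

Lemma gf_ntrees : eq_below C (1 + 'X * (C * C)).
Proof.
move=> [|m] Hm; rewrite coefD coefXM_case coef1 coef_gf //=.
  by rewrite /ntrees sum_trees0 addr0.
by rewrite coef_gf_mul -?ntreesS ?add0r //; lia.
Qed.

Lemma gf_nleaves : eq_below L ('X + 'X * (L * C + C * L)).
Proof.
move=> [|m] Hm; rewrite coefD coefXM_case coefX coef_gf //=.
  by rewrite /nleaves sum_trees0 addr0.
by rewrite coefD !coef_gf_mul ?nleavesS ?natrD ?big_split ?natrD //; lia.
Qed.

Lemma gf_tdepth : eq_below D ('X * (D * C + C * D + L * C + C * L)).
Proof.
move=> [|m] Hm; rewrite coefXM_case coef_gf //=.
  by rewrite /tdepth sum_trees0.
by rewrite !coefD !coef_gf_mul ?tdepthS ?big_split ?natrD //; lia.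
Qed.

Lemma gf_cbin_sqr : eq_below (B * B) Q.
Proof. by move=> m Hm; rewrite coef_gf_mul // coef_gf // -/(cbin_conv m) cbin_conv_exp. Qed.

Lemma gf_exp4 : eq_below (Q * (1 - 'X *+ 4)) 1.
Proof.
move=> m Hm; rewrite mulrBr mulr1 mulrnAr coefB coefMn mulrC coefXM_case coef1.
case: m Hm => [|m] Hm; first by rewrite coef_gf // subr0.
by rewrite !coef_gf ?(ltnW Hm) // expnS natrM mulr_natl subrr.
Qed.

Lemma gf_root_sqr : eq_below (Root * Root) (1 - 'X *+ 4).
Proof.
apply: (eq_below_rewrite (K := - ('X *+ 4)) (M := 1 + ('X * 'X * C * C) *+ 4) gf_ntrees).
  by rewrite /Root; ring.
by ring.
Qed.

Lemma gf_nleaves_root : eq_below (L * Root) 'X.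
Proof.
apply: (eq_below_rewrite (K := 1) (M := - ('X * L * C) *+ 2) gf_nleaves).
  by rewrite /Root; ring.
by ring.
Qed.

Lemma gf_tdepth_root : eq_below ((D + L) * Root) L.
Proof.
apply: (eq_below_rewrite (K := 1) (M := L - ('X * C * D) *+ 2 - ('X * L * C) *+ 2) gf_tdepth).
  by rewrite /Root; ring.
by ring.
Qed.

Lemma gf_cbin_root : eq_below (B * Root) 1.
Proof.
have [N0 | N_gt0] := posnP N; first by move=> i; rewrite N0.
have Hsqr : eq_below ((B * Root) * (B * Root)) 1.
  have H1 : eq_below ((B * Root) * (B * Root)) ((B * B) * (1 - 'X *+ 4)).
    by apply: (eq_below_rewrite (K := B * B) (M := 0) gf_root_sqr); ring.
  have H2 : eq_below ((B * B) * (1 - 'X *+ 4)) (Q * (1 - 'X *+ 4)).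
    by apply: (eq_below_rewrite (K := 1 - 'X *+ 4) (M := 0) gf_cbin_sqr); ring.
  exact: eq_below_trans H1 (eq_below_trans H2 gf_exp4).
have Hfac : eq_below ((B * Root - 1) * (B * Root + 1)) 0.
  by apply: (eq_below_rewrite (K := 1) (M := - 1) Hsqr); ring.
have Hunit : (B * Root + 1)`_0 != 0.
  by rewrite coefD coef1 coef0M /Root coefB coefMn coefXM_case coef1 coef_gf.
by apply: (eq_below_rewrite (K := 1) (M := 1) (eq_below_mul0 Hfac Hunit)); ring.
Qed.

Lemma gf_nleaves_closed : eq_below L ('X * B).
Proof.
have HL : eq_below (L * (B * Root)) L.
  by apply: (eq_below_rewrite (K := L) (M := 0) gf_cbin_root); ring.
apply: eq_below_trans (eq_below_sym HL) _.
by apply: (eq_below_rewrite (K := B) (M := 0) gf_nleaves_root); ring.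
Qed.

Lemma gf_tdepth_closed : eq_below (D + L) ('X * Q).
Proof.
have HDL : eq_below ((D + L) * (B * Root)) (D + L).
  by apply: (eq_below_rewrite (K := D + L) (M := 0) gf_cbin_root); ring.
have HLB : eq_below ((D + L) * (B * Root)) (B * L).
  by apply: (eq_below_rewrite (K := B) (M := 0) gf_tdepth_root); ring.
have HBB : eq_below (B * L) ('X * (B * B)).
  by apply: (eq_below_rewrite (K := B) (M := 0) gf_nleaves_closed); ring.
have HQ : eq_below ('X * (B * B)) ('X * Q).
  by apply: (eq_below_rewrite (K := 'X) (M := 0) gf_cbin_sqr); ring.
exact: eq_below_trans (eq_below_sym HDL) (eq_below_trans HLB (eq_below_trans HBB HQ)).
Qed.

End TruncatedSeries.

Lemma nleaves_tdepth_closed n :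
  nleaves n.+1 = cbin n /\ tdepth n.+1 + nleaves n.+1 = expn 4 n.
Proof.
have HL := @gf_nleaves_closed n.+2 _ (ltnSn n.+1).
have HD := @gf_tdepth_closed n.+2 _ (ltnSn n.+1).
rewrite coefXM_case !coef_gf // in HL.
rewrite coefD coefXM_case !coef_gf // -GRing.natrD in HD.
by split; apply/eqP; rewrite -(Num.Theory.eqr_nat int) ?HL ?HD.
Qed.

(** * Double factorials and Wallis integrals *)

Lemma dfact_gt0 k : 0 < dfact k.
Proof.
suff : 0 < dfact k /\ 0 < dfact k.+1 by case.
by elim: k => [|k [H1 H2]] //; split => //=; rewrite muln_gt0.
Qed.

Lemma dfactSS k : dfact k.+2 = k.+2 * dfact k.
Proof. by []. Qed.

Lemma dfact_double m : dfact m.*2 = expn 2 m * m`!.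
Proof. by elim: m => [|m IH] //; rewrite doubleS dfactSS IH expnS factS; lia. Qed.

Lemma dfactS_mul k : dfact k.+1 * dfact k = k.+1`!.
Proof. by elim: k => [|k IH] //; rewrite dfactSS factS -IH; lia. Qed.

Lemma dfact_cbin m : dfact m.*2 * cbin m = expn 4 m * dfact m.*2.-1.
Proof.
case: m => [|j] //; set m := j.+1.
have Hfact : dfact m.*2 * dfact m.*2.-1 = m.*2`! by rewrite /m doubleS dfactS_mul.
have Hbin : cbin m * (m`! * m`!) = m.*2`!.
  by rewrite /cbin -addnn; have := bin_fact (leq_addr m m); rewrite addnK.
apply/eqP; rewrite -(eqn_pmul2l (dfact_gt0 m.*2)); apply/eqP.
rewrite mulnCA Hfact -Hbin -[4](@mulnn 2) expnMn dfact_double; ring.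
Qed.

Section RealEstimates.
(* The standard-library [ring] and [field] on [R], shadowed by those of mathcomp. *)
Import Stdlib.setoid_ring.Ring_tac Stdlib.setoid_ring.Field_tac.
Local Open Scope R_scope.

Definition wallis k : R := RInt (fun x => sin x ^ k) 0 (PI / 2).

Lemma continuous_sin_pow k x : continuous (fun x => sin x ^ k) x.
Proof. by apply: ex_derive_continuous; auto_derive. Qed.

Lemma ex_RInt_sin_pow k : ex_RInt (fun x => sin x ^ k) 0 (PI / 2).
Proof. by apply: ex_RInt_continuous => x _; apply: continuous_sin_pow. Qed.

Lemma wallis0 : wallis 0 = PI / 2.
Proof. by rewrite /wallis RInt_const /scal /= /mult /=; ring. Qed.

Lemma wallis1 : wallis 1 = 1.
Proof.
have Hprim : is_RInt (fun x => sin x ^ 1) 0 (PI / 2) (- cos (PI / 2) - - cos 0).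
  apply: (is_RInt_derive (fun x => - cos x)) => x _.
  - by auto_derive => //=; ring.
  - exact: continuous_sin_pow.
have -> : wallis 1 = _ := is_RInt_unique _ _ _ _ Hprim.
by rewrite cos_PI2 cos_0; ring.
Qed.

(* Integration by parts, in the form: x |-> -sin x ^ (k+1) cos x is a primitive of
   (k+2) sin x ^ (k+2) - (k+1) sin x ^ k, and it vanishes at 0 and PI/2. *)
Lemma wallisSS k : INR k.+2 * wallis k.+2 = INR k.+1 * wallis k.
Proof.
set g := fun x => INR k.+2 * sin x ^ k.+2 - INR k.+1 * sin x ^ k.
have Hg : is_RInt g 0 (PI / 2) (INR k.+2 * wallis k.+2 - INR k.+1 * wallis k).
  have Ha := is_RInt_scal _ _ _ (INR k.+2) _ (RInt_correct _ _ _ (ex_RInt_sin_pow k.+2)).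
  have Hb := is_RInt_scal _ _ _ (INR k.+1) _ (RInt_correct _ _ _ (ex_RInt_sin_pow k)).
  exact: is_RInt_minus Ha Hb.
have Hprim : is_RInt g 0 (PI / 2)
    (- (sin (PI / 2) ^ k.+1 * cos (PI / 2)) - - (sin 0 ^ k.+1 * cos 0)).
  apply: (is_RInt_derive (fun x => - (sin x ^ k.+1 * cos x))) => x _.
  - auto_derive => //; rewrite /g -/(INR k.+1) !S_INR /=.
    have Hc : cos x * cos x = 1 - sin x * sin x by have := sin2_cos2 x; rewrite /Rsqr; lra.
    have : (INR k + 1) * sin x ^ k * (cos x * cos x - (1 - sin x * sin x)) = 0.
      by rewrite Hc; ring.
    lra.
  - by apply: ex_derive_continuous; rewrite /g; auto_derive.
have Hsin0 : sin 0 ^ k.+1 = 0 by rewrite sin_0 pow_i //; lia.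
move: (is_RInt_unique _ _ _ _ Hg); rewrite (is_RInt_unique _ _ _ _ Hprim).
by rewrite cos_PI2 Hsin0; lra.
Qed.

Lemma wallisS_le k : wallis k.+1 <= wallis k.
Proof.
apply: RInt_le; try apply: ex_RInt_sin_pow; first by have := PI_RGT_0; lra.
move=> x Hx /=.
have Hsin : 0 <= sin x by apply: sin_ge_0; have := PI_RGT_0; lra.
have := proj2 (SIN_bound x); have := pow_le _ k Hsin; nra.
Qed.

Lemma wallis_dfact k :
  wallis k * INR (dfact k) = INR (dfact k.-1) * (if odd k then 1 else PI / 2).
Proof.
elim/ltn_ind: k => -[|[|k]] IH; first by rewrite wallis0 /=; ring.
  by rewrite wallis1 /=; ring.
rewrite dfactSS mult_INR (_ : dfact k.+2.-1 = k.+1 * dfact k.-1)%nat; last by case: k {IH}.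
transitivity (INR k.+2 * wallis k.+2 * INR (dfact k)); first ring.
rewrite wallisSS Rmult_assoc IH; last exact: ltnW (ltnSn _).
by rewrite [odd k.+2]/= negbK mult_INR; ring.
Qed.

Lemma INR_dfact_gt0 k : 0 < INR (dfact k).
Proof. by apply: lt_0_INR; apply/ltP; apply: dfact_gt0. Qed.

Definition dfact_ratio n := INR (dfact n.*2) / INR (dfact n.*2.-1).

(* Wallis: with r the ratio, W(2n+1) = r/(2n+2), W(2n+2) = PI/(2r), W(2n+3) = r/(2n+3),
   and W decreases. *)
Lemma dfact_ratio_sqr_bounds n :
  PI * INR n.+1 <= dfact_ratio n.+1 * dfact_ratio n.+1 <= PI * (INR n.+1 + / 2).
Proof.
set m := n.*2; have Hodd : odd m = false by apply: odd_double.
have F1 : wallis m.+1 * INR (dfact m.+1) = INR (dfact m).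
  by have := wallis_dfact m.+1; rewrite oddS Hodd Rmult_1_r.
have F2 : wallis m.+2 * (INR m.+2 * INR (dfact m)) = INR (dfact m.+1) * (PI / 2).
  by have := wallis_dfact m.+2; rewrite !oddS Hodd negbK dfactSS mult_INR.
have F3 : wallis m.+3 * (INR m.+3 * INR (dfact m.+1)) = INR m.+2 * INR (dfact m).
  by have := wallis_dfact m.+3; rewrite !oddS Hodd negbK Rmult_1_r !dfactSS !mult_INR.
have M1 := wallisS_le m.+1; have M2 := wallisS_le m.+2.
have Ha := INR_dfact_gt0 m; have Hb := INR_dfact_gt0 m.+1.
have Er : dfact_ratio n.+1 = INR m.+2 * INR (dfact m) / INR (dfact m.+1).
  by rewrite /dfact_ratio doubleS dfactSS mult_INR.
rewrite Er.
set a := INR (dfact m) in F1 F2 F3 Ha *; set b := INR (dfact m.+1) in F1 F2 F3 Hb *.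
set w1 := wallis m.+1 in F1 M1; set w2 := wallis m.+2 in F2 M1 M2.
set w3 := wallis m.+3 in F3 M2.
have Hm : INR m = 2 * INR n by rewrite /m -mul2n mult_INR [INR 2]/=; ring.
rewrite !S_INR Hm in F2 F3 *.
have Hn := pos_INR n.
set r := (2 * INR n + 1 + 1) * a / b.
have Hrb : r * b = (2 * INR n + 1 + 1) * a by rewrite /r; field; lra.
have Hr : 0 < r by rewrite /r; apply: Rdiv_lt_0_compat => //; nra.
have G1 : w1 * (2 * INR n + 1 + 1) = r.
  by apply: (Rmult_eq_reg_r b); [rewrite Hrb; nra | lra].
have G2 : w2 * r = PI / 2.
  by apply: (Rmult_eq_reg_r b); [rewrite Rmult_assoc Hrb; lra | lra].
have G3 : w3 * (2 * INR n + 1 + 1 + 1) = r.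
  by apply: (Rmult_eq_reg_r b); [rewrite Hrb; lra | lra].
have K1 := Rmult_le_compat_r (r * (2 * INR n + 1 + 1)) _ _ ltac:(nra) M1.
have K2 := Rmult_le_compat_r (r * (2 * INR n + 1 + 1 + 1)) _ _ ltac:(nra) M2.
split; nra.
Qed.

Lemma Rabs_sub_sqrt_le x r c :
  0 < x -> 0 <= r -> x - c <= r * r <= x -> Rabs (r - sqrt x) <= c / sqrt x.
Proof.
move=> Hx Hr [Hlo Hhi]; have Hs := sqrt_lt_R0 _ Hx; have Hss := sqrt_sqrt _ (Rlt_le _ _ Hx).
have Hrs : r <= sqrt x by nra.
rewrite Rabs_minus_sym Rabs_pos_eq; last lra.
apply: (Rmult_le_reg_r (sqrt x)) => //; rewrite /Rdiv Rmult_assoc Rinv_l; nra.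
Qed.

Lemma dfact_ratio_asymptotic n :
  Rabs (dfact_ratio n.+1 - sqrt (PI * INR n.+2)) <= PI / sqrt (INR n.+2).
Proof.
have [Hlo Hhi] := dfact_ratio_sqr_bounds n.
have HPI := PI_RGT_0; have HPI1 : 1 <= PI by have := PI2_3_2; lra.
have Hn : 0 < INR n.+2 by apply: lt_0_INR; lia.
have Hr : 0 <= dfact_ratio n.+1.
  by apply: Rdiv_le_0_compat; [apply: Rlt_le |]; apply: INR_dfact_gt0.
apply: Rle_trans (Rabs_sub_sqrt_le (c := PI) _ Hr _) _.
- exact: Rmult_lt_0_compat.
- by rewrite !S_INR in Hlo Hhi *; split; nra.
apply: Rmult_le_compat_l; first lra.
apply: Rinv_le_contravar; first exact: sqrt_lt_R0.
by apply: sqrt_le_1_alt; nra.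
Qed.

Lemma INR_subn_div (a b p q : nat) :
  (0 < b)%nat -> (0 < q)%nat -> (b <= a)%nat -> (p * b = a * q)%nat ->
  INR (a - b) / INR b = INR p / INR q - 1.
Proof.
move=> Hb Hq Hba Hpq.
have Hb' : 0 < INR b by apply: lt_0_INR; apply/ltP.
have Hq' : 0 < INR q by apply: lt_0_INR; apply/ltP.
have HR : INR p * INR b = INR a * INR q by rewrite -!mult_INR !multE Hpq.
by rewrite minus_INR; [field_simplify_eq; lra | apply/leP].
Qed.

End RealEstimates.

Theorem mainTheorem16 :
  (forall (n : nat), 2 <= n ->
   forall (s : seq bt), uniq s -> (forall t : bt, (t \in s) = (bsize t == n)) ->
   let npairs := sumn [seq size (leaf_depths t) | t <- s] in
   let totdist := sumn [seq sumn (leaf_depths t) | t <- s] in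
   [/\ npairs = 'C(2 * n - 2, n - 1),
       totdist = expn 4 (n - 1) - 'C(2 * n - 2, n - 1)
     & (INR totdist / INR npairs
        = INR (dfact (2 * n - 2)) / INR (dfact (2 * n - 3)) - 1)%R])
  /\
  (exists C : R, forall n : nat, 2 <= n ->
     (Rabs ((INR (dfact (2 * n - 2)) / INR (dfact (2 * n - 3)) - 1)
            - (sqrt (PI * INR n) - 1)) <= C / sqrt (INR n))%R).
Proof.
have Eidx q : [/\ 2 * q.+2 - 2 = q.+1.*2, q.+2 - 1 = q.+1 & 2 * q.+2 - 3 = q.+1.*2.-1].
  by split; lia.
split=> [[|[|q]] // _ s Us Hs npairs totdist | ].
  have [E2 E1 E3] := Eidx q.
  have [HL HDL] := nleaves_tdepth_closed q.+1.
  have HD : tdepth q.+2 = expn 4 q.+1 - cbin q.+1 by rewrite -HDL HL addnK.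
  rewrite /npairs /totdist !(sumn_map_trees _ Us Hs) -/(nleaves _) -/(tdepth _).
  rewrite E1 E2 E3 -/(cbin q.+1) HL HD.
  split=> //; apply: INR_subn_div; rewrite ?dfact_cbin ?dfact_gt0 ?bin_gt0 -?HDL ?HL //.
  - by rewrite -addnn leq_addr.
  - exact: leq_addl.
exists PI => -[|[|q]] // _; have [E2 _ E3] := Eidx q.
rewrite E2 E3 (_ : forall a b : R, (a - 1 - (b - 1) = a - b)%R); last by move=> a b; lra.
exact: dfact_ratio_asymptotic.
Qed.
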